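(* Let $K$ be a field, $D=K[x,y]$, and let $f,g\in D$ be polynomials with zero constant term which are coprime (equivalently, they form a regular sequence in $D_{(x,y)}$). Then for every sufficiently large integer $N$, we have $\frac{x}{(fg)^N}\in R(D)$ and $\frac{y}{(fg)^N}\in R(D)$.
   Context: For an integral domain $D$ with fraction field $F$, the reciprocal complement $R(D)$ is the subring of $F$ generated by all $1/d$, $d\in D\setminus\{0\}$; equivalently the set of all finite sums $\sum_i 1/d_i$ with $d_i\in D\setminus\{0\}$. *)

From HB Require Import structures.
From mathcomp Require Import all_boot all_order all_algebra.
From mathcomp Require Import fraction.
Set Implicit Arguments. Unset Strict Implicit. Unset Printing Implicit Defensive.
Import GRing.Theory.
Local Open Scope ring_scope.

(* The bivariate polynomial ring D = K[x,y] is represented as {poly {poly K}}: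
   x is the inner variable ('X%:P) and y is the outer variable 'X. *)
Definition bipoly (K : fieldType) := {poly {poly K}}.
Definition varx (K : fieldType) : bipoly K := ('X : {poly K})%:P.
Definition vary (K : fieldType) : bipoly K := 'X.

Definition const_term (K : fieldType) (f : bipoly K) : K := (f`_0)`_0.

Definition rdvd (R : comPzRingType) (h f : R) : Prop := exists q : R, f = h * q.

Definition rcoprime (R : comUnitRingType) (f g : R) : Prop :=
  forall h : R, rdvd h f -> rdvd h g -> h \is a GRing.unit.

Definition tofr (R : idomainType) (a : R) : {fraction R} := @FracField.tofrac R a.

(* The reciprocal complement R(D): the subring of Frac(D) generated by all
   1/d, d in D \ {0}; i.e. r lies in every subring of Frac(D) containing
   every 1/d. *)
Definition recip_compl (R : idomainType) : {fraction R} -> Prop :=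
  fun r => forall S : {pred {fraction R}},
    subring_closed S ->
    (forall d : R, d != 0 -> (tofr d)^-1 \in S) ->
    r \in S.

(** Reduce modulo [y]: [f(x,0)] and [g(x,0)] lie in the one-variable ring [K[x]],
    so a dimension count gives a nonzero [P] in [K[S,T]] with
    [P(f(x,0), g(x,0)) = 0], i.e. [P(f,g) = y q].  Since [f] and [g] are coprime
    and vanish at the origin they are algebraically independent, so [q <> 0].
    (If [P(f,g) = 0] with [P] not divisible by [T], then [g] divides
    [f^k A(f)] with [A(0) <> 0]; a Bezout identity [s f + t g = r(x)] coming from
    the resultant, together with Gauss's lemma for [K[x][y]], shows that this
    forces [A(f)] to vanish at the origin.)  Finally, for [N] at least the
    degrees of [P],
      [y / (fg)^N = q^-1 * sum_(i,j) c_ij / (f^(N-i) g^(N-j))]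
    is a sum of products of reciprocals.  Reducing modulo [x] instead gives the
    claim for [x]. *)

From mathcomp Require Import all_boot all_algebra qfpoly.
From mathcomp Require Import zify ring.
From Stdlib Require Import Classical.
Set Implicit Arguments. Unset Strict Implicit. Unset Printing Implicit Defensive.
Import GRing.Theory.
Local Open Scope ring_scope.

Section ReciprocalComplement.
Variable R : idomainType.
Implicit Types (x y : {fraction R}) (a d : R).

Lemma recip_complV d : d != 0 -> recip_compl (tofr d)^-1.
Proof. by move=> d0 S _; apply. Qed.

Lemma recip_compl1 : recip_compl (1 : {fraction R}).
Proof. by move=> S []. Qed.

Lemma recip_complB x y : recip_compl x -> recip_compl y -> recip_compl (x - y).
Proof. by move=> hx hy S SR SV; case: (SR) => _ SB _; apply: SB; [apply: hx | apply: hy]. Qed.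

Lemma recip_complM x y : recip_compl x -> recip_compl y -> recip_compl (x * y).
Proof. by move=> hx hy S SR SV; case: (SR) => _ _ SM; apply: SM; [apply: hx | apply: hy]. Qed.

Lemma recip_compl0 : recip_compl (0 : {fraction R}).
Proof. by rewrite -(subrr 1); apply: recip_complB recip_compl1 recip_compl1. Qed.

Lemma recip_complD x y : recip_compl x -> recip_compl y -> recip_compl (x + y).
Proof.
move=> hx hy; rewrite -[y]opprK -[- y]sub0r.
by apply: recip_complB hx (recip_complB recip_compl0 hy).
Qed.

Lemma recip_compl_sum (I : Type) (r : seq I) (F : I -> {fraction R}) :
  (forall i, recip_compl (F i)) -> recip_compl (\sum_(i <- r) F i).
Proof. by move=> hF; apply: big_ind => //; [apply: recip_compl0 | apply: recip_complD]. Qed.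

Lemma recip_compl_unit a : a \is a GRing.unit -> recip_compl (tofr a).
Proof.
move=> ua; rewrite -[tofr a]invrK /tofr -rmorphV //.
by apply: recip_complV; rewrite invr_eq0; apply: contraTneq ua => ->; rewrite unitr0.
Qed.
End ReciprocalComplement.

Lemma exprMn_div (F : fieldType) (x y : F) (i j N : nat) :
  x != 0 -> y != 0 -> (i <= N)%N -> (j <= N)%N ->
  x ^+ i * y ^+ j / (x * y) ^+ N = (x ^+ (N - i) * y ^+ (N - j))^-1.
Proof.
move=> x0 y0 iN jN.
have -> : (x * y) ^+ N = x ^+ i * y ^+ j * (x ^+ (N - i) * y ^+ (N - j)).
  by rewrite exprMn mulrACA -!exprD !subnKC.
by rewrite invfM mulrA mulfV ?mul1r // mulf_neq0 ?expf_neq0.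
Qed.

Section Eval2.
Variables (K : fieldType) (B : comNzRingType) (iota : {rmorphism K -> B}) (a b : B).

(* [eval2 iota a b P] is [P(a, b)]: the inner variable of [P] goes to [a], the outer one to [b]. *)
Definition eval1 : {rmorphism {poly K} -> B} := horner_morph (fun k => mulrC a (iota k)).
Definition eval2 : {rmorphism {poly {poly K}} -> B} := horner_morph (fun p => mulrC b (eval1 p)).

Lemma eval1_horner p : eval1 p = (map_poly iota p).[a]. Proof. by []. Qed.
Lemma eval2_horner P : eval2 P = (map_poly eval1 P).[b]. Proof. by []. Qed.
Lemma eval1X : eval1 'X = a. Proof. exact: horner_morphX. Qed.
Lemma eval2C p : eval2 p%:P = eval1 p. Proof. exact: horner_morphC. Qed.
Lemma eval2X : eval2 'X = b. Proof. exact: horner_morphX. Qed.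
Lemma eval1_at0 p : a = 0 -> eval1 p = iota p`_0.
Proof. by move=> a0; rewrite eval1_horner a0 horner_coef0 coef_map. Qed.

Definition bisize (P : {poly {poly K}}) := maxn (size P) (\max_(j < size P) size (P`_j)%R).

Lemma eval2E (P : {poly {poly K}}) n : (bisize P <= n)%N ->
  eval2 P = \sum_(j < n) \sum_(i < n) iota P`_j`_i * a ^+ i * b ^+ j.
Proof.
rewrite geq_max => /andP[sP /bigmax_leqP_seq sPj].
rewrite eval2_horner (horner_coef_wide _ (leq_trans (size_poly _ _) sP)).
apply: eq_bigr => j _; rewrite coef_map /= eval1_horner.
have sPj' : (size (P`_j)%R <= n)%N.
  have [jP|jP] := ltnP j (size P); first exact: (sPj (Ordinal jP) (mem_index_enum _)).
  by rewrite nth_default // size_poly0.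
rewrite (horner_coef_wide _ (leq_trans (size_poly _ _) sPj')) mulr_suml.
by apply: eq_bigr => i _; rewrite coef_map.
Qed.
End Eval2.

Section Eval2Map.
Variables (K : fieldType) (B B' : comNzRingType).
Variables (iota : {rmorphism K -> B}) (iota' : {rmorphism K -> B'}).
Variable phi : {rmorphism B -> B'}.
Hypothesis phi_iota : forall k, phi (iota k) = iota' k.

Lemma eval1_map a p : phi (eval1 iota a p) = eval1 iota' (phi a) p.
Proof.
rewrite !eval1_horner -horner_map -map_poly_comp.
by congr (_.[_]); apply: eq_map_poly => k /=; rewrite phi_iota.
Qed.

Lemma eval2_map a b P : phi (eval2 iota a b P) = eval2 iota' (phi a) (phi b) P.
Proof.
rewrite !eval2_horner -horner_map -map_poly_comp.
by congr (_.[_]); apply: eq_map_poly => p /=; rewrite eval1_map.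
Qed.
End Eval2Map.

Lemma recip_compl_eval2_div (K : fieldType) (R : idomainType) (iota : {rmorphism K -> R})
    (f g z q : R) (P : {poly {poly K}}) (N : nat) :
  f != 0 -> g != 0 -> q != 0 -> eval2 iota f g P = z * q -> (bisize P <= N)%N ->
  recip_compl (tofr z / tofr ((f * g) ^+ N)).
Proof.
move=> f0 g0 q0 ePzq PN.
have q0F : tofr q != 0 by rewrite tofrac_eq0.
have -> : tofr z / tofr ((f * g) ^+ N) =
    (tofr q)^-1 * (tofr (eval2 iota f g P) / tofr ((f * g) ^+ N)).
  by rewrite ePzq /tofr rmorphM /= -mulrA mulrCA mulKf.
apply: recip_complM; first exact: recip_complV.
rewrite (eval2E _ _ _ PN) /tofr rmorph_sum mulr_suml; apply: recip_compl_sum => j.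
rewrite rmorph_sum mulr_suml; apply: recip_compl_sum => i.
rewrite -mulrA rmorphM /= -mulrA; apply: recip_complM.
  have [->|c0] := eqVneq P`_j`_i 0; first by rewrite !rmorph0; apply: recip_compl0.
  by apply: recip_compl_unit; rewrite rmorph_unit ?unitfE.
rewrite !(rmorphM, rmorphXn) /= exprMn_div ?tofrac_eq0 ?(ltnW (ltn_ord _)) //.
by rewrite -!rmorphXn -rmorphM; apply: recip_complV; rewrite mulf_neq0 ?expf_neq0.
Qed.

Lemma poly_lin_dep (K : fieldType) (I : finType) (d : nat) (v : I -> {poly K}) :
  (d < #|I|)%N -> (forall i, (size (v i) <= d)%N) ->
  exists2 c : I -> K, (exists i, c i != 0) & \sum_i c i *: v i = 0.
Proof.
move=> dI vd; pose M := \matrix_(k < #|I|, l < d) (v (enum_val k))`_l.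
have : kermx M != 0.
  by rewrite -mxrank_eq0 mxrank_ker subn_eq0 -ltnNge (leq_ltn_trans (rank_leq_col M)).
case/rowV0Pn => u /sub_kermxP uM u0; exists (fun i => u 0 (enum_rank i)).
  have /existsP[k uk] : [exists k, u 0 k != 0].
    by apply: contraR u0 => /existsPn uk; apply/eqP/rowP => k; rewrite mxE; apply/eqP/negPn/uk.
  by exists (enum_val k); rewrite enum_valK.
apply/polyP => l; rewrite coef_sum coef0.
have [ld|dl] := ltnP l d; last first.
  by rewrite big1 // => i _; rewrite coefZ nth_default ?mulr0 // (leq_trans (vd i)).
have := congr1 (fun N : 'rV_d => N 0 (Ordinal ld)) uM; rewrite !mxE => uMl.
apply: (etrans _ uMl); rewrite (reindex (@enum_val I predT)) /=; last first.
  by exists enum_rank => i _; rewrite ?enum_valK ?enum_rankK.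
by apply: eq_bigr => k _; rewrite coefZ enum_valK mxE.
Qed.

Lemma poly_alg_dep (K : fieldType) (a b : {poly K}) :
  exists2 P : {poly {poly K}}, P != 0 & eval2 polyC a b P = 0.
Proof.
(* the [n^2] products [a^i b^j], [i, j < n], have size at most [s n + 1 < n^2] *)
pose s := (size a + size b)%N; pose n := s.+2.
have [|i|c [i0 ci0] cv] := @poly_lin_dep K ('I_n * 'I_n)%type (s * n).+1
    (fun i => a ^+ i.1 * b ^+ i.2).
- by rewrite card_prod card_ord /n /s; nia.
- apply: leq_trans (size_polyMleq _ _) _.
  have := size_poly_exp_leq a i.1; have := size_poly_exp_leq b i.2.
  have := ltn_ord i.1; have := ltn_ord i.2.
  move: (size (a ^+ i.1)) (size (b ^+ i.2)) => x y; rewrite /s /n; nia.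
exists (\poly_(j < n) \poly_(i < n) c (inord i, inord j)).
  apply: contraNneq ci0 => /(congr1 (fun P : {poly {poly K}} => P`_i0.2`_i0.1)).
  by rewrite !(coef_poly, ltn_ord, inord_val) -surjective_pairing !coef0 => ->.
rewrite (@eval2E _ _ _ _ _ _ n); last first.
  rewrite geq_max size_poly; apply/bigmax_leqP => j _.
  by rewrite coef_poly; case: ifP => _; rewrite ?size_poly ?size_poly0.
rewrite -{}[RHS]cv exchange_big pair_bigA; apply: eq_bigr => -[i j] _ /=.
by rewrite !(coef_poly, ltn_ord, inord_val) -mul_polyC mulrA.
Qed.

Section RingDivisibility.
Variable R : comPzRingType.
Implicit Types u v w : R.

Lemma rdvd_trans u v w : rdvd u v -> rdvd v w -> rdvd u w.
Proof. by move=> [a ->] [b ->]; exists (a * b); rewrite mulrA. Qed.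

Lemma rdvd_refl u : rdvd u u.
Proof. by exists 1; rewrite mulr1. Qed.

Lemma rdvd_mulr u v : rdvd u (u * v).
Proof. by exists v. Qed.

Lemma rdvd_mull u v : rdvd u (v * u).
Proof. by exists v; rewrite mulrC. Qed.
End RingDivisibility.

Lemma rcoprime_sym (R : comUnitRingType) (f g : R) : rcoprime f g -> rcoprime g f.
Proof. by move=> fg h hg hf; apply: fg. Qed.

Section ConstantDivisors.
Variable K : fieldType.
Local Notation D := {poly {poly K}}.
Implicit Types (c e : {poly K}) (d u v w : D).

Lemma rdvd_polyCP c w : c != 0 -> rdvd c%:P w <-> forall i, c %| w`_i.
Proof.
move=> c0; split=> [[q ->] i|cw]; first by rewrite coefCM dvdp_mulr.
exists (\poly_(i < size w) (w`_i %/ c)); apply/polyP=> i.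
rewrite coefCM coef_poly; case: ltnP => [_|wi]; first by rewrite mulrC divpK.
by rewrite nth_default // mulr0.
Qed.

Section IrreducibleConstant.
Variables (p : {poly K}) (hp : monic_irreducible_poly p).

(* [K[x]/(p)] is a field, which is what makes [p] prime in [K[x][y]]. *)
Definition in_qfpoly : {poly K} -> {poly %/ p with hp} := in_qpoly p.

Lemma in_qfpoly_eq0 c : (in_qfpoly c == 0) = (p %| c).
Proof.
have pE : mk_monic p = p by rewrite /mk_monic !hp.
apply/eqP/idP => [/val_eqP /= | pc].
  by rewrite -Pdiv.IdomainMonic.modpE pE //; case: hp.
by apply/val_eqP; rewrite /= -Pdiv.IdomainMonic.modpE pE //; case: hp.
Qed.

Lemma rdvd_polyC_map w : rdvd p%:P w <-> map_poly in_qfpoly w = 0.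
Proof.
rewrite rdvd_polyCP ?irredp_neq0 //; last by case: hp.
split=> [pw|/polyP wp i].
  by apply/polyP => i; rewrite coef_map coef0; apply/eqP; rewrite in_qfpoly_eq0.
by have := wp i; rewrite coef_map coef0 => /eqP; rewrite in_qfpoly_eq0.
Qed.

Lemma rdvd_polyC_irrM u v : rdvd p%:P (u * v) -> rdvd p%:P u \/ rdvd p%:P v.
Proof.
by rewrite !rdvd_polyC_map rmorphM => /eqP; rewrite mulf_eq0 => /orP[] /eqP; [left|right].
Qed.

Lemma rdvd_polyC_irrXM u v a : rdvd p%:P (u ^+ a * v) -> rdvd p%:P u \/ rdvd p%:P v.
Proof.
elim: a => [|a IH]; first by rewrite mul1r; right.
by rewrite exprS -mulrA => /rdvd_polyC_irrM[|/IH]; [left|].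
Qed.
End IrreducibleConstant.

Lemma ex_monic_irreducible_dvdp c : (1 < size c)%N ->
  exists2 p, monic_irreducible_poly p & p %| c.
Proof.
have [n] := ubnP (size c); elim: n c => // n IH c /ltnSE sc c1.
have c0 : c != 0 by rewrite -size_poly_gt0 ltnW.
case: (classic (exists2 d : {poly K}, (1 < size d < size c)%N & d %| c)).
  move=> [d /andP[d1 dc] dvd].
  by have [p hp pd] := IH d (leq_trans dc sc) d1; exists p => //; apply: dvdp_trans dvd.
move=> nod.
have lc0 : (lead_coef c)^-1 != 0 by rewrite invr_eq0 lead_coef_eq0.
exists ((lead_coef c)^-1 *: c); last by rewrite dvdpZl.
split; last by rewrite monicE lead_coefZ mulVf ?lead_coef_eq0.
split=> [|d]; first by rewrite size_scale.
rewrite dvdpZr // => d1 dc; apply: (@eqp_trans _ c); last by rewrite eqp_sym eqp_scale.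
have d0 : d != 0 by apply: contraNneq c0 => d0; rewrite -dvd0p -d0.
rewrite -(dvdp_size_eqp dc) eqn_leq dvdp_leq //= leqNgt; apply/negP => dlt.
apply: nod; exists d => //; rewrite dlt andbT ltn_neqAle eq_sym d1 /=.
by rewrite size_poly_gt0.
Qed.

Lemma rdvd_polyCM c d w : c != 0 -> rdvd d (c%:P * w) ->
  exists e d', [/\ e != 0, d = e%:P * d' & rdvd d' w].
Proof.
have [n] := ubnP (size c); elim: n c d => // n IH c d /ltnSE sc c0 [q dq].
have [c1|c1] := leqP (size c) 1.
  exists 1, d; split; rewrite ?oner_neq0 ?mul1r //.
  move: c0 dq; rewrite (size1_polyC c1) polyC_eq0 => k0 dq.
  exists ((c`_0)^-1%:P%:P * q); rewrite mulrCA -dq mulrA -!rmorphM.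
  by rewrite mulVf // !rmorph1 mul1r.
have [p hp pc] := ex_monic_irreducible_dvdp c1.
have p1 : (1 < size p)%N by case: hp => -[].
have p0 : p != 0 by rewrite -size_poly_gt0 ltnW.
have ec : c = (c %/ p) * p by rewrite divpK.
have c'0 : c %/ p != 0 by apply: contraNneq c0 => c'0; rewrite ec c'0 mul0r.
have sc' : (size (c %/ p)%R < n)%N.
  by apply: leq_trans _ sc; rewrite size_divp // ltn_subrL -subn1 subn_gt0 p1 (ltnW c1).
have cw : c%:P * w = p%:P * ((c %/ p)%:P * w) by rewrite {1}ec rmorphM /= mulrCA mulrA.
have pC0 : p%:P != 0 :> D by rewrite polyC_eq0.
have : rdvd p%:P (d * q) by rewrite -dq cw; apply: rdvd_mulr.
case/(rdvd_polyC_irrM hp) => [[d2 ed]|[q2 eq2]].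
  have [|e [d' [e0 ed2 d'w]]] := IH _ d2 sc' c'0.
    by exists q; apply: (mulfI pC0); rewrite [RHS]mulrA -ed -cw dq.
  by exists (p * e), d'; rewrite mulf_neq0 // ed ed2 rmorphM mulrA.
apply: (IH _ d sc' c'0); exists q2; apply: (mulfI pC0).
by rewrite -cw dq eq2 mulrCA.
Qed.
End ConstantDivisors.

Section Bivariate.
Variable K : fieldType.
Local Notation D := {poly {poly K}}.
Implicit Types (f g u v w : D).

Definition iD : {rmorphism K -> D} := polyC \o polyC.

Lemma iDE k : iD k = k%:P%:P. Proof. by []. Qed.

Definition const_termr : {rmorphism D -> K} := horner_eval 0 \o horner_eval 0.

Lemma const_termrE u : const_termr u = const_term u.
Proof. by rewrite /const_termr /= /horner_eval !horner_coef0. Qed.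

Lemma const_termM u v : const_term (u * v) = const_term u * const_term v.
Proof. by rewrite -!const_termrE rmorphM. Qed.

Lemma const_termC (c : {poly K}) : const_term (c%:P : D) = c`_0.
Proof. by rewrite /const_term coefC. Qed.

Lemma const_term_unit u : u \is a GRing.unit -> const_term u != 0.
Proof. by move/(rmorph_unit const_termr); rewrite const_termrE unitfE. Qed.

Lemma const_term_eval1 f (c : {poly K}) : const_term f = 0 -> const_term (eval1 iD f c) = c`_0.
Proof.
move=> f0; rewrite -const_termrE (eval1_map (iota' := const_termr \o iD)) //.
by rewrite eval1_at0 ?const_termrE //= /horner_eval !hornerC.
Qed.

Lemma rcoprime_neq0 f g : rcoprime f g -> const_term f = 0 -> g != 0.
Proof.
move=> fg f0; apply/eqP => g0; move: (fg f (rdvd_refl f)); rewrite g0.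
by move=> /(_ (ex_intro _ 0 (esym (mulr0 f)))) /const_term_unit; rewrite f0 eqxx.
Qed.

Lemma rcoprime_bezout f g : rcoprime f g -> f != 0 -> g != 0 ->
  exists2 r : {poly K}, r != 0 & exists s t, s * f + t * g = r%:P.
Proof.
move=> fg f0 g0.
have [f1|f1] := leqP (size f) 1.
  exists f`_0; first by rewrite -polyC_eq0 -size1_polyC.
  by exists 1, 0; rewrite mul1r mul0r addr0 -size1_polyC.
have [g1|g1] := leqP (size g) 1.
  exists g`_0; first by rewrite -polyC_eq0 -size1_polyC.
  by exists 0, 1; rewrite mul1r mul0r add0r -size1_polyC.
have [[s t] _ /= rst] := resultant_in_ideal f1 g1.
exists (resultant f g); last by exists s, t.
(* A vanishing resultant gives a pseudo-gcd of positive degree in [y]; removing its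
   content twice leaves a common divisor of [f] and [g] that is not a unit. *)
apply/negP; rewrite resultant_eq0; set d := Pdiv.Idomain.gcdp f g => d1.
case/Pdiv.Idomain.dvdpP: (Pdiv.Idomain.dvdp_gcdl f g) => -[c1 q1] /= c10 eq1.
case/Pdiv.Idomain.dvdpP: (Pdiv.Idomain.dvdp_gcdr f g) => -[c2 q2] /= c20 eq2.
have [|e1 [d' [e10 ed d'f]]] := rdvd_polyCM (d := d) (w := f) c10.
  by exists q1; rewrite mul_polyC eq1 mulrC.
have [|e2 [d'' [e20 ed' d''g]]] := rdvd_polyCM (d := d') (w := g) c20.
  by exists (q2 * e1%:P); rewrite mul_polyC eq2 -/d ed mulrA mulrC.
have d''f : rdvd d'' f by apply: rdvd_trans _ d'f; rewrite ed'; apply: rdvd_mull.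
have := fg d'' d''f d''g; rewrite poly_unitE => /andP[/eqP d''1 _].
by move: d1; rewrite ed size_Cmul // ed' size_Cmul // d''1.
Qed.

Lemma rcoprime_dvd_const_term f g v (a : nat) : rcoprime f g -> const_term f = 0 ->
  rdvd f (g ^+ a * v) -> const_term v = 0.
Proof.
move=> fg f0 [q gvq].
have g0 := rcoprime_neq0 fg f0.
have [fz|fn0] := eqVneq f 0.
  move/eqP: gvq; rewrite fz mul0r mulf_eq0 expf_eq0 (negPf g0) andbF /= => /eqP ->.
  by rewrite /const_term !coef0.
have [r r0 [s [t rst]]] := rcoprime_bezout fg fn0 g0.
have : rdvd f ((r ^+ a)%:P * v).
  (* modulo [f], [r ^+ a = (s * f + t * g) ^+ a] is [(t * g) ^+ a] *)
  have := subrXX (s * f + t * g) (t * g) a; rewrite addrK rst -rmorphXn => /(canRL (subrK _)) ->.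
  exists (s * (\sum_(i < a) (r%:P) ^+ (a.-1 - i) * (t * g) ^+ i) * v + t ^+ a * q).
  by rewrite mulrDl exprMn -[_ * g ^+ a * v]mulrA gvq; ring.
(* [f = e d'] with [d'] dividing [v]: either [d'] or [e] vanishes at the origin, and in
   the latter case [x] divides [f], hence not [g]. *)
case/(rdvd_polyCM (expf_neq0 a r0)) => e [d' [e0 ef [q' vq']]].
move: f0; rewrite ef const_termM const_termC => /eqP; rewrite mulf_eq0.
case/orP => [/eqP e00|/eqP d'0]; last by rewrite vq' const_termM d'0 mul0r.
have hX : monic_irreducible_poly ('X : {poly K}).
  by split; [rewrite -[X in irreducible_poly X]subr0; apply: irredp_XsubC | apply: monicX].
have /factor_theorem[e1 ee1] : root e 0 by rewrite /root horner_coef0 e00.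
have Xf : rdvd ('X : {poly K})%:P f by rewrite ef ee1 subr0 rmorphM mulrAC; apply: rdvd_mull.
have [Xg|[w ->]] := rdvd_polyC_irrXM hX (rdvd_trans Xf (ex_intro _ q gvq)).
  by have := const_term_unit (fg _ Xf Xg); rewrite const_termC coefX eqxx.
by rewrite const_termM const_termC coefX mul0r.
Qed.

Lemma rcoprime_eval2_neq0 f g (P : {poly {poly K}}) : rcoprime f g ->
  const_term f = 0 -> const_term g = 0 -> P != 0 -> eval2 iD f g P != 0.
Proof.
move=> fg f0 g0 P0; have gn0 := rcoprime_neq0 fg f0.
(* [P = P1 T^m] with [c := P1(S, 0) <> 0]; then [g] divides [c(f)], and [c = c1 S^k]
   with [c1(0) <> 0]. *)
case: (multiplicity_XsubC P 0) => m [P1]; rewrite P0 subr0 /= => P10 ->.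
rewrite rmorphM rmorphXn /= eval2X mulf_eq0 negb_or expf_neq0 // andbT.
set c := P1.[0]; have c0 : c != 0 by [].
have /factor_theorem[Q eQ] : root (P1 - c%:P) 0 by rewrite /root !hornerE subrr.
have -> : P1 = Q * 'X + c%:P by rewrite -(subrK c%:P P1) eQ subr0.
rewrite rmorphD rmorphM /= eval2X eval2C; apply/eqP => /(canRL (addKr _)); rewrite addr0.
case: (multiplicity_XsubC c 0) => k [c1]; rewrite c0 subr0 /= => c10 ->.
rewrite rmorphM rmorphXn /= eval1X => E.
have : rdvd g (f ^+ k * eval1 iD f c1) by exists (- eval2 iD f g Q); rewrite mulrC E mulrN mulrC.
move/(rcoprime_dvd_const_term (rcoprime_sym fg) g0)/eqP.
by rewrite const_term_eval1 // -horner_coef0; apply/negP.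
Qed.

Lemma eval2_dvd_of_kernel (f g z : D) (phi : {rmorphism D -> {poly K}}) :
  (forall k, phi (iD k) = k%:P) -> (forall w, phi w = 0 -> rdvd z w) ->
  (forall P, P != 0 -> eval2 iD f g P != 0) ->
  exists P, exists2 q, q != 0 & eval2 iD f g P = z * q.
Proof.
move=> phiC phiz fg_indep; have [P P0 eP] := poly_alg_dep (phi f) (phi g).
have [q Pzq] : rdvd z (eval2 iD f g P) by apply: phiz; rewrite (eval2_map (iota' := polyC)).
by exists P, q => //; apply: contraNneq (fg_indep P P0) => q0; rewrite Pzq q0 mulr0.
Qed.

Lemma rdvd_vary (w : D) : w.[0] = 0 -> rdvd (vary K) w.
Proof.
move=> w0; have /factor_theorem[q ->] : root w 0 by apply/eqP.
by exists q; rewrite subr0 mulrC.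
Qed.

Lemma rdvd_varx (w : D) : map_poly (horner_eval 0) w = 0 -> rdvd (varx K) w.
Proof.
move=> /polyP w0; apply/rdvd_polyCP => [|i]; first by rewrite polyX_eq0.
have := w0 i; rewrite coef_map coef0 /= /horner_eval => wi0.
by rewrite -[X in X %| _]subr0 dvdp_XsubCl /root wi0.
Qed.

Lemma eval2_varx_dvd (f g : D) : (forall P, P != 0 -> eval2 iD f g P != 0) ->
  exists P, exists2 q, q != 0 & eval2 iD f g P = varx K * q.
Proof.
apply: (eval2_dvd_of_kernel (phi := map_poly (horner_eval 0))) => [k|]; last exact: rdvd_varx.
rewrite iDE; apply/polyP => i; rewrite coef_map /= !coefC.
by case: (i == 0)%N; rewrite /horner_eval ?hornerC ?horner0.
Qed.

Lemma eval2_vary_dvd (f g : D) : (forall P, P != 0 -> eval2 iD f g P != 0) ->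
  exists P, exists2 q, q != 0 & eval2 iD f g P = vary K * q.
Proof.
apply: (eval2_dvd_of_kernel (phi := horner_eval 0)) => [k|]; last exact: rdvd_vary.
by rewrite iDE /= /horner_eval hornerC.
Qed.
End Bivariate.

Theorem mainTheorem4 (K : fieldType) (f g : bipoly K) :
  const_term f = 0 -> const_term g = 0 -> rcoprime f g ->
  exists N0 : nat, forall N : nat, (N0 <= N)%N ->
    recip_compl (tofr (varx K) / tofr ((f * g) ^+ N)) /\
    recip_compl (tofr (vary K) / tofr ((f * g) ^+ N)).
Proof.
move=> f0 g0 fg.
have fn0 : f != 0 := rcoprime_neq0 (rcoprime_sym fg) g0.
have gn0 : g != 0 := rcoprime_neq0 fg f0.
have fg_indep := rcoprime_eval2_neq0 fg f0 g0.
have [Px [qx qx0 ePx]] := eval2_varx_dvd fg_indep.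
have [Py [qy qy0 ePy]] := eval2_vary_dvd fg_indep.
exists (maxn (bisize Px) (bisize Py)) => N; rewrite geq_max => /andP[xN yN].
by split; [exact: recip_compl_eval2_div fn0 gn0 qx0 ePx xN |
           exact: recip_compl_eval2_div fn0 gn0 qy0 ePy yN].
Qed.
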